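(* Let $U_1,U_2,V_1,V_2$ be independent real random variables. Assume there exist $0\le c_0\le1$ and $x_0>0$ such that for all $0\le x\le x_0$, $$\mathbb P(|U_1|\ge x)=\mathbb P(|V_1|\ge x)(1+\theta_{1,x}),\qquad\mathbb P(|U_2|\ge x)=\mathbb P(|V_2|\ge x)(1+\theta_{2,x}),$$ with $|\theta_{1,x}|\le c_0$ and $|\theta_{2,x}|\le c_0$. Then for all $0\le x\le x_0$, $$\mathbb P(U_1^2+U_2^2\ge x^2)=\mathbb P(V_1^2+V_2^2\ge x^2)(1+\theta_x)$$ for some $\theta_x$ with $|\theta_x|\le3c_0$. *)

From HB Require Import structures.
From mathcomp Require Import all_boot all_order all_algebra.
From mathcomp Require Import all_classical all_reals all_analysis.
Set Implicit Arguments. Unset Strict Implicit. Unset Printing Implicit Defensive.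
Import Order.TTheory GRing.Theory Num.Theory.
Local Open Scope classical_set_scope.
Local Open Scope ring_scope.

(* Mutual independence of four real random variables: for all Borel sets
   B1..B4, P(X1 in B1, ..., X4 in B4) = prod P(Xi in Bi).  Taking some Bi = setT
   yields the product rule for every subfamily. *)
Definition independent4 d (T : measurableType d) (R : realType)
  (P : probability T R) (X1 X2 X3 X4 : {RV P >-> R}) : Prop :=
  forall B1 B2 B3 B4 : set R,
    measurable B1 -> measurable B2 -> measurable B3 -> measurable B4 ->
    P (X1 @^-1` B1 `&` X2 @^-1` B2 `&` X3 @^-1` B3 `&` X4 @^-1` B4) =
    (P (X1 @^-1` B1) * P (X2 @^-1` B2) * P (X3 @^-1` B3) * P (X4 @^-1` B4))%E.

From HB Require Import structures.
From mathcomp Require Import all_boot all_order all_algebra.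
From mathcomp Require Import all_classical all_reals all_analysis.
From mathcomp Require Import lra measurable_realfun.
Import Order.TTheory GRing.Theory Num.Theory.
Local Open Scope classical_set_scope.
Local Open Scope ring_scope.

(* Conditioning on the second coordinate, independence gives
   P(X^2 + Y^2 >= x^2) = E_Y[P(|X| >= sqrt(x^2 - Y^2))], and every argument
   sqrt(x^2 - y^2) lies in [0, x].  Hence a two-sided ratio bound between the
   tails of |X| and |X'| on [0, x] transfers to X^2 + Y^2 versus X'^2 + Y^2.
   Replacing U1 by V1 and then U2 by V2 yields
   (1 - c0)^2 <= ratio <= (1 + c0)^2, and both ends are within 3 c0 of 1
   because c0 <= 1. *)

Lemma measurable_set_ler d (T : measurableType d) (R : realType) (f g : T -> R) :
  measurable_fun setT f -> measurable_fun setT g -> measurable [set x | f x <= g x].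
Proof.
move=> mf mg; rewrite -[X in measurable X]setTI.
exact: (measurable_fun_ler mf mg) measurableT [set true] I.
Qed.

Lemma exists_theta {R : realFieldType} {e a b : R} : 0 <= e -> 0 <= b ->
  (1 - e) * b <= a -> a <= (1 + e) * b -> exists2 th : R, `|th| <= e & a = b * (1 + th).
Proof.
move=> e0 b0; have [-> lo up|b_neq0 lo up] := eqVneq b 0.
  by exists 0; [rewrite normr0 | move: lo up; rewrite !mulr0 mul0r; lra].
exists (a / b - 1); last by rewrite addrC subrK mulrC divfK.
have b_gt0 : 0 < b by rewrite lt_neqAle eq_sym b_neq0.
rewrite ler_norml lerBrDr ler_pdivlMr // lerBlDr ler_pdivrMr //; apply/andP.
by rewrite ![_ + 1]addrC.
Qed.

Lemma ratio_bounds_trans {R : realFieldType} {c a m b : R} :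
  0 <= c -> c <= 1 -> 0 <= b ->
  (1 - c) * m <= a -> a <= (1 + c) * m ->
  (1 - c) * b <= m -> m <= (1 + c) * b ->
  (1 - 3 * c) * b <= a /\ a <= (1 + 3 * c) * b.
Proof. by move=> *; split; nra. Qed.

Lemma theta_bounds {R : realType} (c th : R) (p : \bar R) :
  p \is a fin_num -> (0 <= p)%E -> `|th| <= c ->
  ((1 - c)%:E * p <= p * (1 + th)%:E)%E /\ (p * (1 + th)%:E <= (1 + c)%:E * p)%E.
Proof.
move: p => [r| |] // _; rewrite lee_fin => r0; rewrite ler_norml => /andP[? ?].
by rewrite -!EFinM !lee_fin; split; nra.
Qed.

Definition outside_disk {R : realType} (x : R) : set (R * R) :=
  [set p | x ^+ 2 <= p.1 ^+ 2 + p.2 ^+ 2].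

Lemma measurable_outside_disk {R : realType} (x : R) : measurable (outside_disk x).
Proof.
apply: measurable_set_ler; first exact: measurable_cst.
by apply: measurable_funD; apply: measurableT_comp (exprn_measurable _) _.
Qed.

Lemma sqrt_sub_sqr_le_norm {R : rcfType} (x y a : R) :
  (Num.sqrt (x ^+ 2 - y ^+ 2) <= `|a|) = (x ^+ 2 <= y ^+ 2 + a ^+ 2).
Proof. by rewrite -sqrtr_sqr ler_sqrt ?sqr_ge0 // lerBlDl. Qed.

Lemma sqrt_sub_sqr_le {R : rcfType} (x y : R) : 0 <= x -> Num.sqrt (x ^+ 2 - y ^+ 2) <= x.
Proof. by move=> x0; rewrite -{2}(ger0_norm x0) sqrt_sub_sqr_le_norm lerDr sqr_ge0. Qed.

Lemma xsection_outside_disk {R : realType} (x y : R) :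
  xsection (outside_disk x) y = [set a | Num.sqrt (x ^+ 2 - y ^+ 2) <= `|a|].
Proof.
by apply/seteqP; split => a; rewrite /xsection /= inE /outside_disk /= sqrt_sub_sqr_le_norm.
Qed.

Definition indep2 {d} {T : measurableType d} {R : realType} {P : probability T R}
  (X Y : {RV P >-> R}) : Prop :=
  forall A B : set R, measurable A -> measurable B ->
    P (X @^-1` A `&` Y @^-1` B) = (P (X @^-1` A) * P (Y @^-1` B))%E.

Section independence.
Context {d : measure_display} {T : measurableType d} {R : realType} {P : probability T R}.

Lemma indep2C {X Y : {RV P >-> R}} : indep2 X Y -> indep2 Y X.
Proof. by move=> XY A B mA mB; rewrite setIC XY // muleC. Qed.

Section four.
Context {X1 X2 X3 X4 : {RV P >-> R}} (X1234 : independent4 X1 X2 X3 X4).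

Lemma independent4_12 : indep2 X1 X2.
Proof.
move=> A B mA mB; have := X1234 _ _ _ _ mA mB measurableT measurableT.
by rewrite !preimage_setT !setIT probability_setT !mule1.
Qed.

Lemma independent4_23 : indep2 X2 X3.
Proof.
move=> A B mA mB; have := X1234 _ _ _ _ measurableT mA mB measurableT.
by rewrite !preimage_setT setIT setTI probability_setT mule1 mul1e.
Qed.

Lemma independent4_34 : indep2 X3 X4.
Proof.
move=> A B mA mB; have := X1234 _ _ _ _ measurableT measurableT mA mB.
by rewrite !preimage_setT !setTI probability_setT !mul1e.
Qed.

End four.

Section joint_law.
Variables X Y : {RV P >-> R}.

Definition pair_RV (w : T) : R * R := (X w, Y w).

Lemma measurable_pair_RV : measurable_fun setT pair_RV.
Proof. by apply: measurable_fun_pair; exact: measurable_funPT. Qed.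

HB.instance Definition _ :=
  isMeasurableFun.Build _ _ _ _ pair_RV measurable_pair_RV.

Lemma indep2_joint_law (A : set (R * R)) : indep2 X Y -> measurable A ->
  P (pair_RV @^-1` A) = ((distribution P X \x distribution P Y) A)%E.
Proof.
move=> XY mA.
by rewrite (product_measure_unique (m' := distribution P pair_RV)); [| exact: XY |].
Qed.

End joint_law.
End independence.

Section sum_of_squares.
Context {d : measure_display} {T : measurableType d} {R : realType} {P : probability T R}.

Lemma sum_sqr_tail_integral (X Y : {RV P >-> R}) (x : R) : indep2 Y X ->
  P [set w | x ^+ 2 <= Y w ^+ 2 + X w ^+ 2] =
  (\int[distribution P Y]_y P [set w | (Num.sqrt (x ^+ 2 - y ^+ 2) <= `|X w|)%R])%E.
Proof.
move=> YX; rewrite -[X in P X]/(pair_RV Y X @^-1` outside_disk x).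
rewrite indep2_joint_law //; last exact: measurable_outside_disk.
by apply: eq_integral => y _ /=; rewrite xsection_outside_disk.
Qed.

Lemma measurable_fun_tail_sub_sqr (X : {RV P >-> R}) (x : R) :
  measurable_fun setT (fun y : R => P [set w | (Num.sqrt (x ^+ 2 - y ^+ 2) <= `|X w|)%R]).
Proof.
have -> : (fun y : R => P [set w | (Num.sqrt (x ^+ 2 - y ^+ 2) <= `|X w|)%R]) =
    distribution P X \o xsection (outside_disk x).
  by apply/funext => y /=; rewrite xsection_outside_disk.
exact: measurable_fun_xsection (measurable_outside_disk x).
Qed.

Lemma le_scaled_tail_sum_sqr (X X' Y : {RV P >-> R}) (x k k' : R) :
  0 <= x -> 0 <= k -> 0 <= k' -> indep2 Y X -> indep2 Y X' ->
  (forall t, 0 <= t -> t <= x ->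
     (k%:E * P [set w | (t <= `|X w|)%R] <= k'%:E * P [set w | (t <= `|X' w|)%R])%E) ->
  (k%:E * P [set w | (x ^+ 2 <= Y w ^+ 2 + X w ^+ 2)%R] <=
   k'%:E * P [set w | (x ^+ 2 <= Y w ^+ 2 + X' w ^+ 2)%R])%E.
Proof.
move=> x0 k0 k'0 YX YX' tailX.
rewrite !sum_sqr_tail_integral // -!ge0_integralZl_EFin //;
  [|exact: measurable_fun_tail_sub_sqr..].
apply: ge0_le_integral => //.
- by move=> y _; rewrite mule_ge0.
- exact: measurable_funeM (measurable_fun_tail_sub_sqr X x).
- exact: measurable_funeM (measurable_fun_tail_sub_sqr X' x).
by move=> y _; apply: tailX; [exact: sqrtr_ge0 | exact: sqrt_sub_sqr_le].
Qed.

Lemma measurable_norm_ge (X : {RV P >-> R}) (t : R) :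
  measurable [set w | (t <= `|X w|)%R].
Proof.
apply: measurable_set_ler; first exact: measurable_cst.
by apply: measurableT_comp; [exact: normr_measurable | exact: measurable_funPT].
Qed.

Lemma measurable_sum_sqr_ge (X Y : {RV P >-> R}) (x : R) :
  measurable [set w | (x ^+ 2 <= X w ^+ 2 + Y w ^+ 2)%R].
Proof.
rewrite -[X in measurable X]setTI.
exact: measurable_pair_RV measurableT _ (measurable_outside_disk x).
Qed.

Lemma sum_sqr_tail_ratio {X X' Y : {RV P >-> R}} {c x : R} :
  0 <= x -> 0 <= c -> c <= 1 -> indep2 Y X -> indep2 Y X' ->
  (forall t, 0 <= t -> t <= x -> exists2 th : R, `|th| <= c &
     P [set w | (t <= `|X w|)%R] = (P [set w | (t <= `|X' w|)%R] * (1 + th)%:E)%E) ->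
  ((1 - c)%:E * P [set w | (x ^+ 2 <= Y w ^+ 2 + X' w ^+ 2)%R] <=
     P [set w | (x ^+ 2 <= Y w ^+ 2 + X w ^+ 2)%R])%E /\
  (P [set w | (x ^+ 2 <= Y w ^+ 2 + X w ^+ 2)%R] <=
     (1 + c)%:E * P [set w | (x ^+ 2 <= Y w ^+ 2 + X' w ^+ 2)%R])%E.
Proof.
move=> x0 c0 c1 YX YX' tailX.
have bounds t : 0 <= t -> t <= x ->
    ((1 - c)%:E * P [set w | (t <= `|X' w|)%R] <= 1%:E * P [set w | (t <= `|X w|)%R])%E /\
    (1%:E * P [set w | (t <= `|X w|)%R] <= (1 + c)%:E * P [set w | (t <= `|X' w|)%R])%E.
  move=> t0 tx; have [th th_le ->] := tailX t t0 tx; rewrite !mul1e.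
  by apply: theta_bounds => //; exact: fin_num_measure (measurable_norm_ge _ _).
split.
- rewrite -[X in (_ <= X)%E]mul1e; apply: le_scaled_tail_sum_sqr => // [|t t0 tx].
    by rewrite subr_ge0.
  exact: (bounds t t0 tx).1.
- rewrite -[X in (X <= _)%E]mul1e; apply: le_scaled_tail_sum_sqr => // [|t t0 tx].
    by rewrite addr_ge0.
  exact: (bounds t t0 tx).2.
Qed.

End sum_of_squares.

Theorem lemma6p3 (d : measure_display) (T : measurableType d) (R : realType)
  (P : probability T R) (U1 U2 V1 V2 : {RV P >-> R})
  (c0 x0 : R) :
  independent4 U1 U2 V1 V2 ->
  0 <= c0 -> c0 <= 1 -> 0 < x0 ->
  (forall x : R, 0 <= x -> x <= x0 ->
     exists2 th1 : R, `|th1| <= c0 &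
       P [set w | (x <= `|U1 w|)%R] = (P [set w | (x <= `|V1 w|)%R] * (1 + th1)%:E)%E) ->
  (forall x : R, 0 <= x -> x <= x0 ->
     exists2 th2 : R, `|th2| <= c0 &
       P [set w | (x <= `|U2 w|)%R] = (P [set w | (x <= `|V2 w|)%R] * (1 + th2)%:E)%E) ->
  forall x : R, 0 <= x -> x <= x0 ->
    exists2 th : R, `|th| <= 3 * c0 &
      P [set w | (x ^+ 2 <= U1 w ^+ 2 + U2 w ^+ 2)%R] =
      (P [set w | (x ^+ 2 <= V1 w ^+ 2 + V2 w ^+ 2)%R] * (1 + th)%:E)%E.
Proof.
move=> UV c0_ge0 c0_le1 _ tailU1 tailU2 x x_ge0 x_le_x0.
have [lo1 up1] := sum_sqr_tail_ratio x_ge0 c0_ge0 c0_le1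
  (indep2C (independent4_12 UV)) (independent4_23 UV)
  (fun t t0 tx => tailU1 t t0 (le_trans tx x_le_x0)).
have [lo2 up2] := sum_sqr_tail_ratio x_ge0 c0_ge0 c0_le1
  (indep2C (independent4_23 UV)) (independent4_34 UV)
  (fun t t0 tx => tailU2 t t0 (le_trans tx x_le_x0)).
have sum_sqrC (X Y : {RV P >-> R}) : [set w | (x ^+ 2 <= X w ^+ 2 + Y w ^+ 2)%R] =
    [set w | (x ^+ 2 <= Y w ^+ 2 + X w ^+ 2)%R].
  by apply/seteqP; split => w /=; rewrite addrC.
rewrite !(sum_sqrC U2) in lo1 up1.
have EFin_fine (X Y : {RV P >-> R}) : P [set w | (x ^+ 2 <= X w ^+ 2 + Y w ^+ 2)%R] =
    (fine (P [set w | (x ^+ 2 <= X w ^+ 2 + Y w ^+ 2)%R]))%:E.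
  by rewrite fineK // fin_num_measure //; exact: measurable_sum_sqr_ge.
rewrite (EFin_fine U1 U2) (EFin_fine V1 U2) (EFin_fine V1 V2) -!EFinM !lee_fin
  in lo1 up1 lo2 up2 *.
have b_ge0 := fine_ge0 (measure_ge0 P [set w | (x ^+ 2 <= V1 w ^+ 2 + V2 w ^+ 2)%R]).
have [lo up] := ratio_bounds_trans c0_ge0 c0_le1 b_ge0 lo1 up1 lo2 up2.
have [th th_le ->] := exists_theta (mulr_ge0 (ler0n _ 3) c0_ge0) b_ge0 lo up.
by exists th; rewrite // EFinM.
Qed.
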